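(* Let $p$ be a prime and $n$ a positive integer. If $\{(a_i,b_i,c_i)\}_{i=1}^m$ is a tricolored ordered sum-free set in $\mathbb{F}_p^n$, then $m\le 3N$, where $N$ is the number of monomials in $n$ variables of total degree at most $(p-1)n/3$ in which each variable has degree at most $p-1$; equivalently, \[N=\sum \frac{n!}{n_0!\,n_1!\cdots n_{p-1}!},\] the sum taken over all non-negative integers $n_0,n_1,\ldots,n_{p-1}$ with $n_0+n_1+\cdots+n_{p-1}=n$ and $n_1+2n_2+\cdots+(p-1)n_{p-1}\le (p-1)n/3$.
   Context: A tricolored ordered sum-free set in an abelian group $H$ is a collection $\{(a_i,b_i,c_i)\}_{i=1}^m$ of ordered triples of elements of $H$ such that (i) $a_i+b_i+c_i=0$ for all $i=1,\ldots,m$, and (ii) for all $i,j,k\in\{1,\ldots,m\}$, if $a_i+b_j+c_k=0$ then $i\le j\le k$. *)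

From mathcomp Require Import all_boot all_algebra.
Set Implicit Arguments. Unset Strict Implicit. Unset Printing Implicit Defensive.
Import GRing.Theory.
Local Open Scope ring_scope.

(* The ambient group F_p^n is the additive group of row vectors 'rV['F_p]_n.
   A family {(a_i,b_i,c_i)}_{i=1}^m is given by three maps 'I_m -> H
   (indices 0..m-1, ordered as naturals). *)
Definition tricolored_ordered_sum_free (H : zmodType) (m : nat)
    (a b c : 'I_m -> H) : Prop :=
  (forall i, a i + b i + c i = 0) /\
  (forall i j k : 'I_m, a i + b j + c k = 0 -> (i <= j)%N /\ (j <= k)%N).

(* N: number of monomials x_1^{e_1}...x_n^{e_n} with each e_t <= p-1 and
   total degree sum e_t <= (p-1)n/3 (i.e. 3 * sum e_t <= (p-1) n). *)
Definition num_monomials (p n : nat) : nat :=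
  #|[set e : {ffun 'I_n -> 'I_p} | (3 * \sum_(t < n) (e t : nat) <= (p - 1) * n)%N]|.

From mathcomp Require Import all_boot all_algebra all_field.
From mathcomp Require Import zify ring.
Set Implicit Arguments. Unset Strict Implicit. Unset Printing Implicit Defensive.
Import GRing.Theory.
Local Open Scope ring_scope.

(* Tao's slice-rank argument, in its ordered form.  Over F_p one has
   x ^ (p-1) = [x != 0], so [a + b + c = 0] = prod_t (1 - (a_t + b_t + c_t) ^ (p-1))
   is a polynomial in the coordinates of a, b, c of total degree at most (p-1)n and
   of degree at most p-1 in each variable.  In each of its monomials one of the three
   factors has degree at most (p-1)n/3, hence the tensor T(i,j,k) = [a_i + b_j + c_k = 0]
   is a sum of at most 3N slices f(i)g(j,k), f(j)g(i,k), f(k)g(i,j).  On the other hand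
   T(i,j,k) != 0 forces i <= j <= k and T(i,i,i) = 1, and such a tensor needs at least
   m slices: some h annihilating the slices of the form f(j)g(i,k) has at least
   m - #{such slices} nonzero entries, and M(i,k) = sum_j h_j T(i,j,k) is then an upper
   triangular matrix with diagonal h that is a sum of one rank-one matrix per remaining
   slice.  Ranks are compared by counting vectors over the finite field. *)

Lemma big_option (R : Type) (idx : R) (op : Monoid.com_law idx) (T : finType)
    (G : option T -> R) :
  \big[op/idx]_(o : option T) G o = op (G None) (\big[op/idx]_(t : T) G (Some t)).
Proof.
rewrite (bigD1 None) // (reindex_omap Some id) => [|[]//].
by congr (op _ _); apply: eq_bigl => t; rewrite eqxx.
Qed.

Lemma big_fiber_in (R : Type) (idx : R) (op : Monoid.com_law idx) (I K : finType)
    (S : {pred K}) (P : pred I) (E : I -> K) (G : I -> R) :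
  \big[op/idx]_(k in S) \big[op/idx]_(i | P i && (E i == k)) G i =
  \big[op/idx]_(i | P i && (E i \in S)) G i.
Proof.
rewrite [RHS](partition_big E (mem S)) => [|i /andP[]//].
apply: eq_bigr => k kS; apply: eq_bigl => i.
by case: (P i); case: eqP => [->|]; rewrite ?kS ?andbT ?andbF.
Qed.

Lemma prod_comp_fibers (R : comPzSemiRingType) (I C : finType) (g : I -> C) (u : C -> R) :
  \prod_i u (g i) = \prod_s u s ^+ #|[pred i | g i == s]|.
Proof.
rewrite (partition_big g predT) //=; apply: eq_bigr => s _.
by rewrite -prodr_const; apply: eq_big => // i /= /eqP ->.
Qed.

Lemma sum_card_fibers (I C : finType) (g : I -> C) :
  (\sum_s #|[pred i | g i == s]| = #|I|)%N.
Proof.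
by rewrite -sum1_card (partition_big g predT) //=; apply: eq_bigr => s _; rewrite sum1_card.
Qed.

Lemma big_ord3 (R : Type) (idx : R) (op : R -> R -> R) (G : 'I_3 -> R) :
  \big[op/idx]_(s < 3) G s = op (G 0) (op (G 1) (op (G 2) idx)).
Proof.
by rewrite !big_ord_recl big_ord0; congr (op (G _) (op (G _) (op (G _) _))); apply: val_inj.
Qed.

Lemma sum_split_slices (R : comPzRingType) (J K : finType) (S : {pred K})
    (w : J -> R) (e1 e2 e3 : J -> K) (u1 u2 u3 : K -> R) :
  (forall j, [|| e1 j \in S, e2 j \in S | e3 j \in S]) ->
  \sum_j w j * (u1 (e1 j) * u2 (e2 j) * u3 (e3 j)) =
    \sum_(l in S) u1 l * \sum_(j | e1 j == l) w j * u2 (e2 j) * u3 (e3 j)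
  + \sum_(l in S) u2 l * \sum_(j | (e1 j \notin S) && (e2 j == l)) w j * u1 (e1 j) * u3 (e3 j)
  + \sum_(l in S) u3 l *
      \sum_(j | (e1 j \notin S) && (e2 j \notin S) && (e3 j == l)) w j * u1 (e1 j) * u2 (e2 j).
Proof.
move=> cover.
have slice (P : pred J) (e : J -> K) (u : K -> R) (v : J -> R) :
    (forall j, P j -> w j * (u1 (e1 j) * u2 (e2 j) * u3 (e3 j)) = u (e j) * v j) ->
    \sum_(l in S) u l * \sum_(j | P j && (e j == l)) v j =
    \sum_(j | P j && (e j \in S)) w j * (u1 (e1 j) * u2 (e2 j) * u3 (e3 j)).
  move=> uv; rewrite -big_fiber_in; apply: eq_bigr => l _; rewrite mulr_sumr.
  by apply: eq_bigr => j /andP[Pj /eqP <-]; rewrite uv.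
rewrite [LHS](bigID (fun j => e1 j \in S)) [X in _ + X = _](bigID (fun j => e2 j \in S)) /=.
rewrite addrA; congr (_ + _ + _); symmetry.
- by apply: (slice predT) => j _; ring.
- by apply: (slice (fun j => e1 j \notin S)) => j _; ring.
rewrite [RHS](eq_bigl (fun j => (e1 j \notin S) && (e2 j \notin S) && (e3 j \in S))) => [|j].
  by apply: (slice (fun j => (e1 j \notin S) && (e2 j \notin S))) => j _; ring.
by move: (cover j); case: (e1 j \in S); case: (e2 j \in S); case: (e3 j \in S).
Qed.

Lemma leq_card_of_determined (V I K L : finType) (v0 : V) (D : {pred I})
    (A : {pred K}) (B : {pred L}) (f : {ffun I -> V} -> K -> V)
    (g : {ffun I -> V} -> L -> V) :
  (1 < #|V|)%N ->
  (forall x y, x \in pffun_on v0 D predT -> y \in pffun_on v0 D predT ->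
     {in A, f x =1 f y} -> {in B, g x =1 g y} -> x = y) ->
  (#|D| <= #|A| + #|B|)%N.
Proof.
move=> V_gt1 determined.
pose restr (J : finType) (P : {pred J}) (h : J -> V) :=
  [ffun j => if j \in P then h j else v0].
pose phi x := (restr _ A (f x), restr _ B (g x)).
have restr_on J P h : @restr J P h \in pffun_on v0 P predT.
  apply/pffun_onP; split=> //; apply/subsetP => j.
  by rewrite !inE ffunE; case: ifP => // _; rewrite eqxx.
have phi_inj : {in pffun_on v0 D predT &, injective phi}.
  move=> x y xD yD [/ffunP fxy /ffunP gxy]; apply: determined => // [k kA|l lB].
    by have := fxy k; rewrite !ffunE kA.
  by have := gxy l; rewrite !ffunE lB.
have := subset_leq_card (_ : phi @: pffun_on v0 D predT \subset
  setX [set h in pffun_on v0 A predT] [set h in pffun_on v0 B predT]).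
rewrite card_in_imset // cardsX !cardsE !card_pffun_on -expnD leq_exp2l //.
apply; apply/subsetP => _ /imsetP[x _ ->].
by rewrite in_setX !in_set /= !restr_on.
Qed.

Lemma exists_annihilator_large_support (F : finFieldType) (I K : finType)
    (S : {pred K}) (B : K -> I -> F) :
  exists2 h : {ffun I -> F},
    (forall k, k \in S -> \sum_j h j * B k j = 0) & (#|I| <= #|S| + #|support h|)%N.
Proof.
pose annihilates (h : {ffun I -> F}) := [forall k in S, \sum_j h j * B k j == 0].
have annihilatesP h k : annihilates h -> k \in S -> \sum_j h j * B k j = 0.
  by move=> /forall_inP ann_h kS; apply/eqP/ann_h.
have ann0 : annihilates 0.
  by apply/forall_inP => k _; rewrite big1 // => j _; rewrite ffunE mul0r.
(* For [h] of maximal support, an annihilator vanishing on [support h] must be 0,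
   since adding it to [h] would enlarge the support. *)
have [h ann_h h_max] := arg_maxnP (fun h : {ffun I -> F} => #|support h|) ann0.
exists h => [k|]; first exact: annihilatesP.
apply: (@leq_card_of_determined _ _ _ _ 0 predT S _ (fun x k => \sum_j x j * B k j) (fun x => x));
  first exact: card_finNzRing_gt1.
move=> x y _ _ Bxy xy_h; apply/ffunP => j0; apply/eqP; rewrite -subr_eq0.
apply/negPn/negP => xy_j0.
pose h' := [ffun j => h j + (x j - y j)].
have ann_h' : annihilates h'.
  apply/forall_inP => k kS; under eq_bigr do rewrite ffunE mulrDl mulrBl.
  by rewrite big_split sumrB /= Bxy // subrr addr0 annihilatesP.
have : support h \proper support h'.
  apply/properP; split.
    by apply/subsetP => j; rewrite !inE ffunE => hj; rewrite xy_h ?subrr ?addr0.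
  have h_j0 : h j0 == 0 by apply: contraR xy_j0 => hj0; rewrite xy_h ?subrr.
  by exists j0; rewrite !inE ?ffunE (eqP h_j0) ?add0r ?eqxx.
have /= h'_le := h_max _ ann_h'.
by move/proper_card; rewrite ltnNge h'_le.
Qed.

Lemma upper_triangular_kernel (F : fieldType) (m : nat) (M : 'I_m -> 'I_m -> F)
    (d : 'I_m -> F) :
  (forall i k : 'I_m, (k < i)%N -> M i k = 0) ->
  (forall k, M k k = 0 -> d k = 0) ->
  (forall i, \sum_k M i k * d k = 0) ->
  forall k, d k = 0.
Proof.
move=> M_upper d_diag Md0 k0; apply/eqP/negPn/negP => d_k0.
have [s d_s s_max] := @arg_maxnP _ k0 (fun k => d k != 0) val d_k0.
have := Md0 s; rewrite (bigD1 s) //= big1 ?addr0 => [/eqP|k k_s].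
  by rewrite mulf_eq0 (negbTE d_s) orbF => /eqP/d_diag/eqP; apply/negP.
case: (ltngtP k s) => [k_lt_s | s_lt_k | /val_inj k_eq_s].
- by rewrite M_upper ?mul0r.
- have /eqP -> : d k == 0 by apply: contraLR s_lt_k => /s_max /= ; rewrite leqNgt.
  by rewrite mulr0.
- by rewrite k_eq_s eqxx in k_s.
Qed.

Lemma card_diag_support_le (F : finFieldType) (m : nat) (K L : finType)
    (S1 : {pred K}) (S2 : {pred L}) (M : 'I_m -> 'I_m -> F)
    (A1 G1 : K -> 'I_m -> F) (A2 G2 : L -> 'I_m -> F) :
  (forall i k : 'I_m, (k < i)%N -> M i k = 0) ->
  (forall i k, M i k = \sum_(l in S1) A1 l i * G1 l k + \sum_(l in S2) A2 l i * G2 l k) ->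
  (#|[pred i | M i i != 0%R]| <= #|S1| + #|S2|)%N.
Proof.
move=> M_upper M_sum.
apply: (@leq_card_of_determined _ _ _ _ 0 _ S1 S2
  (fun x l => \sum_k G1 l k * x k) (fun x l => \sum_k G2 l k * x k));
  first exact: card_finNzRing_gt1.
move=> x y x_diag y_diag G1xy G2xy; apply/ffunP => k; apply/eqP; rewrite -subr_eq0.
apply/eqP; apply: (@upper_triangular_kernel _ _ M (fun k => x k - y k)) => // [k' Mk'|i].
  have off_diag z : z \in pffun_on 0 [pred i | M i i != 0] predT -> z k' = 0.
    case/pffun_onP => /subsetP/(_ k') z_supp _; apply/eqP/negPn/negP => z_k'.
    by move: (z_supp z_k'); rewrite inE Mk' eqxx.
  by rewrite !off_diag ?subrr.
have Gd (J : finType) (S : {pred J}) (G : J -> 'I_m -> F) (A : J -> F) :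
    {in S, (fun l => \sum_k G l k * x k) =1 (fun l => \sum_k G l k * y k)} ->
    \sum_k (\sum_(l in S) A l * G l k) * (x k - y k) = 0.
  move=> Gxy; under eq_bigr do rewrite mulr_suml.
  rewrite exchange_big big1 //= => l l_S.
  under eq_bigr do rewrite -mulrA.
  by rewrite -mulr_sumr; under eq_bigr do rewrite mulrBr; rewrite sumrB Gxy ?subrr ?mulr0.
under eq_bigr do rewrite M_sum mulrDl.
by rewrite big_split /= !Gd ?addr0.
Qed.

Lemma ordered_tensor_slice_rank (F : finFieldType) (m : nat) (K : finType)
    (S1 S2 S3 : {pred K}) (T : 'I_m -> 'I_m -> 'I_m -> F)
    (u1 u2 u3 : K -> 'I_m -> F) (v1 v2 v3 : K -> 'I_m -> 'I_m -> F) :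
  (forall i j k, T i j k != 0 -> (i <= j <= k)%N) ->
  (forall i, T i i i != 0) ->
  (forall i j k, T i j k = \sum_(l in S1) u1 l i * v1 l j k
                         + \sum_(l in S2) u2 l j * v2 l i k
                         + \sum_(l in S3) u3 l k * v3 l i j) ->
  (m <= #|S1| + #|S2| + #|S3|)%N.
Proof.
move=> T_ordered T_diag T_slices.
have [h h_ann h_supp] := exists_annihilator_large_support S2 u2.
pose M i k := \sum_j h j * T i j k.
have M_upper (i k : 'I_m) : (k < i)%N -> M i k = 0.
  move=> k_lt_i; apply: big1 => j _.
  case: (eqVneq (T i j k) 0) => [-> | /T_ordered/andP[i_le_j j_le_k]]; first by rewrite mulr0.
  by move: k_lt_i; rewrite ltnNge (leq_trans i_le_j j_le_k).
have M_diag (i : 'I_m) : (M i i != 0) = (h i != 0).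
  rewrite /M (bigD1 i) //= big1 ?addr0 => [|j j_i].
    by rewrite mulf_eq0 (negbTE (T_diag i)) orbF.
  case: (eqVneq (T i j i) 0) => [-> | /T_ordered]; first by rewrite mulr0.
  by rewrite -eqn_leq => /eqP/val_inj j_eq_i; rewrite j_eq_i eqxx in j_i.
have M_slices (i k : 'I_m) : M i k = \sum_(l in S1) u1 l i * (\sum_j h j * v1 l j k)
                          + \sum_(l in S3) (\sum_j h j * v3 l i j) * u3 l k.
  have S2_part : \sum_j \sum_(l in S2) h j * (u2 l j * v2 l i k) = 0.
    rewrite exchange_big big1 // => l l_S2; under eq_bigr do rewrite mulrA.
    by rewrite -mulr_suml h_ann ?mul0r.
  rewrite /M; under eq_bigr do rewrite T_slices !mulrDr !mulr_sumr.
  rewrite !big_split /= S2_part addr0; congr (_ + _); rewrite exchange_big /=;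
    apply: eq_bigr => l _; rewrite (mulr_sumr, mulr_suml); apply: eq_bigr => j _; ring.
have supp_le : (#|support h| <= #|S1| + #|S3|)%N.
  by rewrite -(eq_card M_diag); exact: card_diag_support_le M_upper M_slices.
by move: h_supp; rewrite card_ord; lia.
Qed.

Lemma natr_row_eq0 (R : comPzSemiRingType) (n : nat) (v : 'rV[R]_n) :
  (v == 0)%:R = \prod_t (v 0 t == 0)%:R :> R.
Proof.
have [->|v_neq0] := eqVneq v 0; first by rewrite big1 // => t _; rewrite mxE eqxx.
have [t v_t] : exists t, v 0 t != 0.
  apply/existsP; apply: contraNT v_neq0 => /existsPn v0.
  by apply/eqP/rowP => t; rewrite mxE; apply/eqP/negbNE/v0.
by rewrite (bigD1 t) //= (negbTE v_t) mul0r.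
Qed.

Lemma expf_card_pred (F : finFieldType) (x : F) : x ^+ #|F|.-1 = (x != 0)%:R.
Proof.
have F_gt1 := card_finNzRing_gt1 F.
have [-> | x_neq0] := eqVneq x 0; first by rewrite expr0n -subn1 subn_eq0 leqNgt F_gt1.
by apply: (mulfI x_neq0); rewrite mulr1 -exprS prednK ?expf_card // ltnW.
Qed.

Section IndicatorExpansion.

Variables (F : fieldType) (q : nat) (C : finType).
Hypothesis expf_indicator : forall x : F, x ^+ q = (x != 0)%:R.

(* [(\sum_s u s == 0)%:R = 1 - (\sum_s u s) ^+ q]; in the expansion of the
   right-hand side, [None] indexes the constant term and [Some g] the term
   [- u (g 0) * ... * u (g q.-1)] of the power. *)
Definition term_coef (j : option {ffun 'I_q -> C}) : F := if j is Some _ then -1 else 1.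

Definition term_exp (j : option {ffun 'I_q -> C}) (s : C) : nat :=
  if j is Some g then #|[pred l | g l == s]| else 0.

Lemma indicator_sum_expansion (u : C -> F) :
  (\sum_s u s == 0)%:R = \sum_j term_coef j * \prod_s u s ^+ term_exp j s.
Proof.
have -> : (\sum_s u s == 0)%:R = 1 - (\sum_s u s) ^+ q.
  by rewrite expf_indicator; case: (_ == 0); rewrite ?subr0 ?subrr.
rewrite -[q in _ ^+ q]card_ord -prodr_const bigA_distr_bigA big_option /=.
rewrite [X in 1 * X]big1 // mul1r -sumrN; congr (_ + _); apply: eq_bigr => g _.
by rewrite prod_comp_fibers mulN1r.
Qed.

Lemma term_exp_sum j : (\sum_s term_exp j s <= q)%N.
Proof. by case: j => [g|] /=; [rewrite sum_card_fibers card_ord | rewrite big1]. Qed.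

Lemma term_exp_le j s : (term_exp j s <= q)%N.
Proof. by apply: leq_trans (term_exp_sum j); rewrite (bigD1 s) //= leq_addr. Qed.

Variable n : nat.

Definition monomial (e : {ffun 'I_n -> 'I_q.+1}) (x : 'rV[F]_n) : F :=
  \prod_t x 0 t ^+ e t.

Definition vec_coef (f : {ffun 'I_n -> option {ffun 'I_q -> C}}) : F :=
  \prod_t term_coef (f t).

Definition vec_exp (f : {ffun 'I_n -> option {ffun 'I_q -> C}}) (s : C) :
  {ffun 'I_n -> 'I_q.+1} := [ffun t => inord (term_exp (f t) s)].

Lemma vec_expE f s t : vec_exp f s t = term_exp (f t) s :> nat.
Proof. by rewrite ffunE inordK // ltnS term_exp_le. Qed.

Lemma indicator_vec_sum_expansion (x : C -> 'rV[F]_n) :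
  (\sum_s x s == 0)%:R = \sum_f vec_coef f * \prod_s monomial (vec_exp f s) (x s).
Proof.
rewrite natr_row_eq0; under eq_bigr do rewrite summxE indicator_sum_expansion.
rewrite bigA_distr_bigA; apply: eq_bigr => f _.
rewrite big_split /= /vec_coef /monomial; congr (_ * _).
rewrite exchange_big /=; apply: eq_bigr => s _; apply: eq_bigr => t _.
by rewrite vec_expE.
Qed.

Lemma vec_exp_deg f : (\sum_s \sum_t vec_exp f s t <= q * n)%N.
Proof.
rewrite exchange_big /= mulnC -[n in (_ <= n * _)%N]card_ord -sum_nat_const.
by apply: leq_sum => t _; under eq_bigr do rewrite vec_expE; exact: term_exp_sum.
Qed.

End IndicatorExpansion.

Lemma indicator_add3_expansion (F : fieldType) (q n : nat)
    (expf_indicator : forall x : F, x ^+ q = (x != 0)%:R) (x y z : 'rV[F]_n) :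
  (x + y + z == 0)%:R =
  \sum_(f : {ffun 'I_n -> option {ffun 'I_q -> 'I_3}})
    vec_coef F f * (monomial (vec_exp f 0) x * monomial (vec_exp f 1) y
                    * monomial (vec_exp f 2) z).
Proof.
have -> : x + y + z = \sum_(s < 3) tnth [tuple x; y; z] s by rewrite big_ord3 addr0 addrA.
rewrite (indicator_vec_sum_expansion expf_indicator); apply: eq_bigr => f _.
by rewrite big_ord3 mulr1 !mulrA.
Qed.

Definition low_degree_monomials (q n : nat) : {set {ffun 'I_n -> 'I_q.+1}} :=
  [set e : {ffun 'I_n -> 'I_q.+1} | (3 * \sum_t e t <= q * n)%N].

Lemma vec_exp_low_degree (q n : nat) (f : {ffun 'I_n -> option {ffun 'I_q -> 'I_3}}) :
  [|| vec_exp f 0 \in low_degree_monomials q n, vec_exp f 1 \in low_degree_monomials q n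
    | vec_exp f 2 \in low_degree_monomials q n].
Proof.
have := vec_exp_deg f; rewrite big_ord3 !inE addn0.
move: (\sum_t _)%N (\sum_t _)%N (\sum_t _)%N (q * n)%N; lia.
Qed.

Theorem theorem3 (p n m : nat) (hp : prime p) (hn : (0 < n)%N)
    (a b c : 'I_m -> 'rV['F_p]_n) :
  tricolored_ordered_sum_free a b c -> (m <= 3 * num_monomials p n)%N.
Proof.
case: p hp a b c => // q hp a b c [abc_eq0 abc_ordered].
have expf_indicator (x : 'F_q.+1) : x ^+ q = (x != 0)%:R.
  by have := expf_card_pred x; rewrite card_Fp.
have -> : num_monomials q.+1 n = #|low_degree_monomials q n|.
  by rewrite /num_monomials subSS subn0.
set L := low_degree_monomials q n.
suff : (m <= #|L| + #|L| + #|L|)%N by lia.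
apply: (ordered_tensor_slice_rank (T := fun i j k => (a i + b j + c k == 0)%:R)).
- move=> i j k; have [/abc_ordered[-> ->] // | _] := eqVneq (a i + b j + c k) 0.
  by rewrite eqxx.
- by move=> i; rewrite abc_eq0 eqxx; exact: oner_neq0.
move=> i j k; apply: etrans (indicator_add3_expansion expf_indicator _ _ _) _.
exact: (sum_split_slices (fun f => vec_coef _ f) (fun e => monomial e (a i))
  (fun e => monomial e (b j)) (fun e => monomial e (c k)) (@vec_exp_low_degree q n)).
Qed.
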